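(* Let $(\pi_r)_{r\in\mathbb{N}}$ be periods, let $(K_t)_{t\in\mathbb{N}}$ be the multiperiodic process with periods $(\pi_r)$, and let $W_r:=\inf\{t\in\mathbb{N}:K_t=r\}$. If $r\in\mathbb{N}$ is such that $\pi_i\ge2$ for all $1\le i\le r-1$, then (for every realization of the seeds) $$W_r\le \bar w_r:=\left(\cdots\left(\left(\pi_r\cdot\frac{\pi_{r-1}}{\pi_{r-1}-1}+1\right)\frac{\pi_{r-2}}{\pi_{r-2}-1}+1\right)\cdots\frac{\pi_1}{\pi_1-1}+1\right),$$ i.e. $\bar w_r=v_1$ where $v_r:=\pi_r$ and $v_i:=v_{i+1}\,\pi_i/(\pi_i-1)+1$ for $i=r-1,\dots,1$.
   Context: $\mathbb{N}=\{1,2,3,\dots\}$. Multiperiodic sequence with periods $\pi_r\in\mathbb{N}$ and seeds $\sigma_r\in\{1,\dots,\pi_r\}$: the sequence $(k_t)_{t\in\mathbb{N}}$ with values in $\mathbb{N}\cup\{\infty\}$ such that for each $r$, the subsequence obtained from $(k_t)$ by deleting all tokens $k_t<r$, denoted $(k^{(r)}_t)_{t\in\mathbb{N}}$, satisfies $k^{(r)}_t=r\iff t\equiv\sigma_r\pmod{\pi_r}$; entries left undefined for all $r$ are set to $\infty$. Equivalently: clocks $\phi_r$ start at $\sigma_r$; for each token, scan $r=1,2,\dots$, decrementing each clock with $\phi_r>1$, until the first $r$ with $\phi_r=1$, output that $r$ and reset $\phi_r=\pi_r$. The multiperiodic process with periods $(\pi_r)$ is the random multiperiodic sequence with these periods and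 independent random seeds $\Sigma_r$ uniformly distributed on $\{1,\dots,\pi_r\}$. *)

From HB Require Import structures.
From mathcomp Require Import all_boot all_order all_algebra.
From Stdlib Require Import ClassicalEpsilon.
Set Implicit Arguments. Unset Strict Implicit. Unset Printing Implicit Defensive.
Import Order.TTheory GRing.Theory Num.Theory.

(* Clocks: phi r for r >= 1 (index 0 is unused). *)
Definition clocks := nat -> nat.

(* Processing one token: scan r = 1,2,...; the output is the least r >= 1
   with phi r = 1 (None encodes the value infinity, when no such r exists). *)
Definition mp_step (pi : nat -> nat) (phi : clocks) : option nat * clocks :=
  match excluded_middle_informative (exists r, (0 < r) && (phi r == 1)) with
  | left H =>
      let r := ex_minn H in
      (Some r, fun i => if i < r then (phi i).-1 else if i == r then pi r else phi i)
  | right _ => (None, fun i => (phi i).-1)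
  end.

Fixpoint mp_state (pi sigma : nat -> nat) (n : nat) : clocks :=
  match n with
  | 0 => sigma
  | n'.+1 => (mp_step pi (mp_state pi sigma n')).2
  end.

(* The multiperiodic sequence k_t, t = 1,2,... (None = infinity). *)
Definition mp_seq (pi sigma : nat -> nat) (t : nat) : option nat :=
  (mp_step pi (mp_state pi sigma t.-1)).1.

(* v_r := pi_r, v_i := v_{i+1} pi_i/(pi_i - 1) + 1;
   mp_v_aux pi r k = v_{r-k}. *)
Fixpoint mp_v_aux (pi : nat -> nat) (r k : nat) : rat :=
  match k with
  | 0 => (pi r)%:R
  | k'.+1 =>
      let i := (r - k)%N in
      (mp_v_aux pi r k' * (pi i)%:R / ((pi i)%:R - 1) + 1)%R
  end.

Definition wbar (pi : nat -> nat) (r : nat) : rat := mp_v_aux pi r r.-1.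

From HB Require Import structures.
From mathcomp Require Import all_boot all_order all_algebra.
From mathcomp Require Import zify ring lra.
From Stdlib Require Import ClassicalEpsilon.
Import Order.TTheory GRing.Theory Num.Theory.

(* Give a clock state phi the potential Phi_1, where Phi_r = phi_r and
   Phi_i = (pi_i Phi_(i+1) - phi_i) / (pi_i - 1) + 1 for i < r.  Since
   1 <= phi_i <= pi_i, we have 1 <= Phi_1 <= v_1 = wbar_r.  A token other than
   r lowers Phi_1 by at least 1: clocks below the output are decremented, and
   the output clock s jumps from 1 to pi_s, which lowers Phi_s by exactly 1;
   a drop by 1 at some level propagates to every lower level through the
   decremented clocks.  Hence r occurs among the first wbar_r tokens. *)

Section Level.
Local Open Scope ring_scope.

Lemma level_ge1 (R : realFieldType) (p a c : R) : 1 < p -> 1 <= a -> c <= p ->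
  1 <= (a * p - c) / (p - 1) + 1.
Proof. by move=> p_gt1 a_ge1 c_le_p; rewrite lerDr divr_ge0 //; [nra | lra]. Qed.

Lemma level_le (R : realFieldType) (p a b c : R) : 1 < p -> a <= b -> 0 <= c ->
  (a * p - c) / (p - 1) + 1 <= b * p / (p - 1) + 1.
Proof.
move=> p_gt1 a_le_b c_ge0.
by rewrite lerD2r ler_pM2r ?invr_gt0 ?subr_gt0 //; nra.
Qed.

Lemma level_drop (R : realFieldType) (p a a' c c' : R) : 1 < p ->
  a' + 1 <= a -> c = c' + 1 ->
  (a' * p - c') / (p - 1) + 1 + 1 <= (a * p - c) / (p - 1) + 1.
Proof.
move=> p_gt1 drop ->; have p1_gt0 : 0 < p - 1 by rewrite subr_gt0.
rewrite lerD2r -[X in _ + X <= _](divff (lt0r_neq0 p1_gt0)) -mulrDl.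
by rewrite ler_pM2r ?invr_gt0 //; nra.
Qed.

Lemma level_reset (R : realFieldType) (p a : R) : 1 < p ->
  (a * p - p) / (p - 1) + 1 + 1 = (a * p - 1) / (p - 1) + 1.
Proof. by move=> p_gt1; field; rewrite subr_eq0 gt_eqF. Qed.

End Level.

Variant mp_step_spec (pi : nat -> nat) (phi : clocks) : option nat * clocks -> Prop :=
  | MpStepSome s of 0 < s & phi s = 1 & (forall i, 0 < i < s -> 2 <= phi i) :
      mp_step_spec pi phi
        (Some s, fun i => if i < s then (phi i).-1 else if i == s then pi s else phi i)
  | MpStepNone of (forall i, 0 < i -> 2 <= phi i) :
      mp_step_spec pi phi (None, fun i => (phi i).-1).

Lemma mp_stepP pi phi : (forall i, 0 < i -> 0 < phi i) -> mp_step_spec pi phi (mp_step pi phi).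
Proof.
move=> phi_gt0; rewrite /mp_step; case: excluded_middle_informative => [ex1 | no1].
  case: ex_minnP => s /andP[s_gt0 /eqP phi_s] s_min; constructor => // i /andP[i_gt0 i_lt_s].
  have := phi_gt0 i i_gt0; rewrite leq_eqVlt => /orP[/eqP phi_i|//].
  by have := s_min i; rewrite i_gt0 -phi_i eqxx => /(_ isT); rewrite leqNgt i_lt_s.
constructor => i i_gt0; have := phi_gt0 i i_gt0; rewrite leq_eqVlt => /orP[/eqP phi_i|//].
by case: no1; exists i; rewrite i_gt0 -phi_i.
Qed.

Lemma mp_state_bounds pi sigma :
  (forall i, 0 < i -> 0 < pi i) -> (forall i, 0 < i -> 1 <= sigma i <= pi i) ->
  forall n i, 0 < i -> 1 <= mp_state pi sigma n i <= pi i.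
Proof.
move=> pi_gt0 sigma_bounds n; elim: n => [|n IH] i i_gt0 /=; first exact: sigma_bounds.
have phi_gt0 j : 0 < j -> 0 < mp_state pi sigma n j by move=> /IH /andP[].
have := IH i i_gt0; case: (mp_stepP pi _ phi_gt0) => [s s_gt0 _ phi_ge2 | phi_ge2] /=.
  case: (ltnP i s) => [i_lt_s | s_le_i]; first by have := phi_ge2 i; lia.
  by case: eqP => [-> | //]; have := pi_gt0 s s_gt0; lia.
by have := phi_ge2 i i_gt0; lia.
Qed.

(* [potential pi phi r k] is Phi_(r-k), indexed like [mp_v_aux]. *)
Fixpoint potential (pi : nat -> nat) (phi : clocks) (r k : nat) : rat :=
  match k with
  | 0 => (phi r)%:R
  | k'.+1 =>
      let i := (r - k)%N in
      ((potential pi phi r k' * (pi i)%:R - (phi i)%:R) / ((pi i)%:R - 1) + 1)%R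
  end.

Section Potential.
Variables (pi : nat -> nat) (r : nat).
Hypothesis pi_ge2 : forall i, 0 < i < r -> 2 <= pi i.
Local Open Scope ring_scope.

Let pi_gt1 k : (k.+1 < r)%N -> 1 < (pi (r - k.+1))%:R :> rat.
Proof. by move=> kr; rewrite ltr1n pi_ge2 //; lia. Qed.

Lemma eq_potential phi phi' k : (forall i, (r - k <= i <= r)%N -> phi' i = phi i) ->
  potential pi phi' r k = potential pi phi r k.
Proof.
elim: k => [|k IH] eq_phi /=; first by rewrite eq_phi ?subn0 ?leqnn.
rewrite IH => [|i ri]; last by apply: eq_phi; lia.
by rewrite eq_phi //; lia.
Qed.

Lemma potential_ge1 phi k : (forall i, (0 < i <= r)%N -> (1 <= phi i <= pi i)%N) ->
  (k < r)%N -> 1 <= potential pi phi r k.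
Proof.
move=> phi_bounds; elim: k => [|k IH] kr /=.
  by have /andP[] := phi_bounds r ltac:(lia); rewrite ler1n.
have /andP[_ phi_le] := phi_bounds (r - k.+1)%N ltac:(lia).
by apply: level_ge1; rewrite ?pi_gt1 ?IH ?ler_nat //; lia.
Qed.

Lemma potential_le_v phi k : (phi r <= pi r)%N -> (k < r)%N ->
  potential pi phi r k <= mp_v_aux pi r k.
Proof.
move=> phi_r; elim: k => [|k IH] kr /=; first by rewrite ler_nat.
by apply: level_le; rewrite ?pi_gt1 ?IH //; lia.
Qed.

Lemma potential_drop phi phi' j k : (j <= k < r)%N ->
  (forall i, (r - k <= i < r - j)%N -> (phi' i).+1 = phi i) ->
  potential pi phi' r j + 1 <= potential pi phi r j ->
  potential pi phi' r k + 1 <= potential pi phi r k.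
Proof.
elim: k => [|k IH] jkr decr drop_j; first by have <- : j = 0%N by lia.
case: (ltnP j k.+1) => [j_le_k | k_lt_j]; first last.
  by have <- : j = k.+1 by lia.
apply: level_drop; first by rewrite pi_gt1 //; lia.
  by apply: IH => // [|i ri]; [lia | apply: decr; lia].
by rewrite -decr -?natr1 //; lia.
Qed.

Lemma potential_decr phi phi' : (0 < r)%N ->
  (forall i, (0 < i <= r)%N -> (phi' i).+1 = phi i) ->
  potential pi phi' r r.-1 + 1 <= potential pi phi r r.-1.
Proof.
move=> r_gt0 decr; apply: (@potential_drop _ _ 0) => [|i ri|/=]; try lia.
  by apply: decr; lia.
by rewrite natr1 decr //; lia.
Qed.

Lemma potential_reset phi phi' s : (0 < s < r)%N ->
  phi s = 1%N -> phi' s = pi s ->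
  (forall i, (0 < i < s)%N -> (phi' i).+1 = phi i) ->
  (forall i, (s < i <= r)%N -> phi' i = phi i) ->
  potential pi phi' r r.-1 + 1 <= potential pi phi r r.-1.
Proof.
move=> sr phi_s phi'_s decr same; apply: (@potential_drop _ _ (r - s)) => [|i ri|]; try lia.
  by apply: decr; lia.
have -> : (r - s = (r - s.+1).+1)%N by lia.
rewrite /= (_ : (r - (r - s.+1).+1 = s)%N); last by lia.
rewrite (@eq_potential phi phi') => [|i ri]; last by apply: same; lia.
by rewrite phi_s phi'_s level_reset // ltr1n pi_ge2.
Qed.

Lemma potential_mp_step phi : (0 < r)%N ->
  (forall i, (0 < i)%N -> (1 <= phi i <= pi i)%N) -> (mp_step pi phi).1 != Some r ->
  potential pi (mp_step pi phi).2 r r.-1 + 1 <= potential pi phi r r.-1.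
Proof.
move=> r_gt0 phi_bounds; have phi_gt0 i : (0 < i)%N -> (0 < phi i)%N.
  by move=> /phi_bounds /andP[].
case: (mp_stepP pi _ phi_gt0) => [s s_gt0 phi_s phi_ge2 | phi_ge2] /= s_neq_r; last first.
  by apply: potential_decr => // i /andP[i_gt0 _]; have := phi_ge2 i i_gt0; lia.
case: (ltngtP s r) => [s_lt_r | r_lt_s | s_eq_r]; last by rewrite s_eq_r eqxx in s_neq_r.
  apply: (@potential_reset _ _ s) => //; rewrite ?ltnn ?eqxx ?s_gt0 //.
    by move=> i /andP[i_gt0 i_lt_s]; rewrite i_lt_s; have := phi_ge2 i; lia.
  by move=> i /andP[s_lt_i _]; rewrite ltnNge (ltnW s_lt_i) gtn_eqF.
apply: potential_decr => // i ir; have i_lt_s : (i < s)%N by lia.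
by rewrite i_lt_s; have := phi_ge2 i; lia.
Qed.

End Potential.

Section Run.
Variables (pi sigma : nat -> nat) (r : nat).
Hypothesis pi_gt0 : forall i, 0 < i -> 0 < pi i.
Hypothesis sigma_bounds : forall i, 0 < i -> 1 <= sigma i <= pi i.
Hypothesis r_gt0 : 0 < r.
Hypothesis pi_ge2 : forall i, 0 < i < r -> 2 <= pi i.
Local Open Scope ring_scope.

Let P n := potential pi (mp_state pi sigma n) r r.-1.

Lemma misses_lt_potential n :
  (forall t, (0 < t <= n)%N -> mp_seq pi sigma t != Some r) -> n.+1%:R <= P 0.
Proof.
have state_bounds := @mp_state_bounds pi sigma pi_gt0 sigma_bounds.
suff run : (forall t, (0 < t <= n)%N -> mp_seq pi sigma t != Some r) -> P n + n%:R <= P 0.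
  move=> /run; have : 1 <= P n.
    by apply: (@potential_ge1 pi r pi_ge2) => [i /andP[i_gt0 _]|]; [exact: state_bounds | lia].
  rewrite -natr1; lra.
elim: n => [|n IH] miss; first by rewrite addr0.
have := @potential_mp_step pi r pi_ge2 _ r_gt0 (state_bounds n) (miss n.+1 ltac:(lia)).
have := IH (fun t tn => miss t ltac:(lia)).
rewrite /P /= -natr1; lra.
Qed.

Lemma exists_hit : exists t, (0 < t)%N && (mp_seq pi sigma t == Some r).
Proof.
pose N := Num.Def.archi_bound (P 0).
have /hasP[t] : has (fun t => mp_seq pi sigma t == Some r) (iota 1 N).
  apply: contraT => /hasPn miss.
  have P0_ge1 : 1 <= P 0 by apply: (misses_lt_potential 0) => t; lia.
  have := archi_boundP (le_trans ler01 P0_ge1); rewrite -/N.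
  suff : N.+1%:R <= P 0 by rewrite -natr1; lra.
  by apply: misses_lt_potential => t tN; apply: miss; rewrite mem_iota; lia.
by rewrite mem_iota => /andP[t_gt0 _] hit; exists t; rewrite t_gt0.
Qed.

End Run.

Theorem theorem5 (pi sigma : nat -> nat)
  (hpi : forall i, 0 < i -> 0 < pi i)
  (hsigma : forall i, 0 < i -> 1 <= sigma i <= pi i)
  (r : nat) (hr : 0 < r)
  (h2 : forall i, 1 <= i <= r.-1 -> 2 <= pi i) :
  exists t : nat, [/\ 0 < t, mp_seq pi sigma t = Some r & (t%:R <= wbar pi r)%R].
Proof.
have pi_ge2 i : 0 < i < r -> 2 <= pi i by move=> ir; apply: h2; lia.
have [t /andP[t_gt0 /eqP hit] t_min] := ex_minnP (@exists_hit pi sigma r hpi hsigma hr pi_ge2).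
exists t; split; [exact: t_gt0 | exact: hit |].
apply: le_trans (@potential_le_v pi r pi_ge2 sigma r.-1 _ _); last by lia.
  have -> : t = t.-1.+1 by lia.
  apply: (@misses_lt_potential pi sigma r hpi hsigma hr pi_ge2) => t' t'_lt_t.
  apply/negP => hit'; have := t_min t'; rewrite hit' andbT; lia.
by have /andP[] := hsigma r hr.
Qed.
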